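(* Let $x\in\widetilde{\mathcal{S}}$ and $0\le i\le\ell'$. (1) If $x\succ y$ for some $y\in\mathcal{S}^{\mathbf G}_i$, then for every $y_0\in\mathcal{S}^{\mathbf G}_i$, either $x$ and $y_0$ are incomparable or $x\succ y_0$. (2) If $x\prec y$ for some $y\in\mathcal{S}^{\mathbf G}_i$, then for every $y_0\in\mathcal{S}^{\mathbf G}_i$, either $x$ and $y_0$ are incomparable or $x\prec y_0$.
   Context: Let $F$ be a number field with adèles $\mathbb{A}$, $D$ a central division algebra over $F$ of degree $d>1$, $G'_m$ the group of invertible elements of $M_m(D)$, $G_m=GL_m$ over $F$; parabolics are standard (block-upper-triangular), attached to ordered partitions; $\nu$ is the absolute value of reduced norm (resp. determinant). For the parabolic attached to $(n_1,\dots,n_r)$, third entries are $\underline z\in\mathbb{R}^r$ with $\sum n_jz_j=0$, $z_1\ge\dots\ge z_r$, $\nu_{\underline z}=\prod\nu(\ell_j)^{z_j}$; $\iota'$ (for $G'_n$) and $\iota$ (for $G_{nd}$) send $\underline z$ to $(z_1,\dots,z_1,\dots,z_r,\dots,z_r)$ with $z_j$ repeated $n_j$ times. Partial order on $\mathbb{R}^N$: $\underline s\succ\underline t$ iff $\underline s\ne\underline t$ and $\sum_{j\le i}s_j\le\sum_{j\le i}t_j$ for $i=1,\dots,N-1$; $x\prec y$ means $y\succ x$; comparable means one is $\succ$ the other. Fix a cuspidal automorphic representation $\pi'$ of the Levi factor of a parabolic $P'$ of $G'_n$ and let $\sigma$ be the cuspidal representation of the Levi factor of a parabolic $Q$ of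 $G_{nd}$ given by the cuspidal support of its factorwise global Jacquet–Langlands transfer $\mathbf G(\pi')$ (Badulescu). $\mathcal{M}'$ (resp. $\mathcal{M}$) is the set of triples $(R',\Pi',\underline z')$ with $R'$ a parabolic of $G'_n$ containing an element associate to $P'$, $\Pi'$ a unitary discrete spectrum representation of its Levi factor, $\underline z'$ in the closed positive chamber, such that the cuspidal support of $\Pi'\otimes\nu_{\underline z'}$ is associate to $\pi'$ (resp. the same for $G_{nd}$, $Q$, $\sigma$). The map $\mathbf G:\mathcal{M}'\to\mathcal{M}$ sends $(R',\Pi'_1\otimes\cdots\otimes\Pi'_r,\underline z')$, $R'$ attached to $(n_1,\dots,n_r)$, to $(R,\mathbf G(\Pi'_1)\otimes\cdots\otimes\mathbf G(\Pi'_r),\underline z')$, $R$ attached to $(n_1d,\dots,n_rd)$. Let $\mathcal{S}'=\{\iota'(\underline z'):(R',\Pi',\underline z')\in\mathcal{M}'\}$ and $\mathcal{S}=\{\iota(\underline z):(R,\Pi,\underline z)\in\mathcal{M}\}$ (finite sets). Partition $\mathcal{S}'$: let $\mathcal{S}^{\rm aux}_0$ be the set of $\succ$-maximal elements of $\mathcal{S}'$ and inductively $\mathcal{S}^{\rm aux}_i$ the maximal elements of $\mathcal{S}'\setminus\bigcup_{j<i}\mathcal{S}^{\rm aux}_j$, until exhausted after $\ell'+1$ steps; $\mathcal{S}'_i=\mathcal{S}^{\rm aux}_{\ell'-i}$. Define $\mathcal{S}^{\mathbf G}_i=\{\iota(\mathbf G(\underline z')):\iota'(\underline z')\in\mathcal{S}'_i\}$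 for $0\le i\le\ell'$, where $\iota(\mathbf G(\underline z'))$ is obtained from $\iota'(\underline z')$ by repeating each coordinate $d$ times, $\mathcal{S}^{\mathbf G}=\bigcup_i\mathcal{S}^{\mathbf G}_i$, and $\widetilde{\mathcal{S}}=\mathcal{S}\setminus\mathcal{S}^{\mathbf G}$. *)

From HB Require Import structures.
From mathcomp Require Import all_boot all_order all_algebra.
Set Implicit Arguments. Unset Strict Implicit. Unset Printing Implicit Defensive.
Import Order.TTheory GRing.Theory Num.Theory.
Local Open Scope ring_scope.

Section Defs.
Variable R : realFieldType.

(* Vectors of R^N are represented as sequences of length N. *)

Definition succv (s t : seq R) : bool :=
  [&& size s == size t, s != t &
      all (fun i => \sum_(r <- take i s) r <= \sum_(r <- take i t) r)
          (iota 1 (size s).-1)].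

Definition precv (s t : seq R) : bool := succv t s.

Definition comparablev (s t : seq R) : bool := succv s t || succv t s.

(* A "third entry" datum: an ordered partition (n_1,...,n_r) of N together
   with z in R^r, z_1 >= ... >= z_r, sum n_j z_j = 0. *)
Definition chamber (N : nat) (p : seq nat * seq R) : bool :=
  [&& all (fun k => 0 < k)%N p.1, sumn p.1 == N, size p.2 == size p.1,
      sorted (fun a b => b <= a) p.2 &
      \sum_(jz <- zip p.1 p.2) (jz.1)%:R * jz.2 == 0].

Definition iotaz (p : seq nat * seq R) : seq R :=
  flatten [seq nseq jz.1 jz.2 | jz <- zip p.1 p.2].

Definition Gtriple (d : nat) (p : seq nat * seq R) : seq nat * seq R :=
  ([seq (k * d)%N | k <- p.1], p.2).

Definition expand (d : nat) (s : seq R) : seq R := flatten [seq nseq d r | r <- s].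

(* Peeling of a finite set S (given as a sequence) into layers of
   succ-maximal elements. rest S k = S minus aux_0,...,aux_{k-1}. *)
Fixpoint rest (S : seq (seq R)) (k : nat) : seq (seq R) :=
  match k with
  | 0 => S
  | k'.+1 =>
      let r := rest S k' in
      [seq s <- r | has (fun t => succv t s) r]
  end.

Definition aux (S : seq (seq R)) (k : nat) : seq (seq R) :=
  let r := rest S k in [seq s <- r | ~~ has (fun t => succv t s) r].

Definition ellp (S : seq (seq R)) : nat :=
  find (fun k => nilp (rest S k.+1)) (iota 0 (size S).+1).

Definition layer (S : seq (seq R)) (i : nat) : seq (seq R) :=
  aux S (ellp S - i).

End Defs.

(** The maximal elements of a finite poset form an antichain, and [≻] is
    transitive on vectors with a common coordinate sum (the last partial sum is
    then forced, so [a ≻ b ≻ a] would make all partial sums, hence [a] and [b],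
    equal).  The vectors of [S] and of every [S^G_i] have coordinate sum [0],
    and expanding coordinates [d] times reflects [≻], so each [S^G_i] is an
    antichain.  Now if [x ≻ y] and [y0 ≻ x] with [y, y0] in [S^G_i], then
    [y0 ≻ y]: impossible; symmetrically for [≺]. *)
From HB Require Import structures.
From mathcomp Require Import all_boot all_order all_algebra.
From mathcomp Require Import zify.
Set Implicit Arguments. Unset Strict Implicit. Unset Printing Implicit Defensive.
Import Order.TTheory GRing.Theory Num.Theory.
Local Open Scope ring_scope.

Section SuccOrder.
Variable R : realFieldType.
Implicit Types a b c s x y : seq R.

Definition prefix_sum s (i : nat) : R := \sum_(r <- take i s) r.

Lemma nth_prefix_sum s j :
  (j < size s)%N -> nth 0 s j = prefix_sum s j.+1 - prefix_sum s j.
Proof.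
move=> lt_j_s; rewrite /prefix_sum (take_nth 0 lt_j_s) -cats1 big_cat big_seq1 /=.
by rewrite addrC addrK.
Qed.

Lemma prefix_sum_inj a b :
  size a = size b -> (forall i, prefix_sum a i = prefix_sum b i) -> a = b.
Proof.
move=> eq_sz eq_ps; apply: (eq_from_nth (x0 := 0) eq_sz) => j lt_j_a.
by rewrite !nth_prefix_sum -?eq_sz // !eq_ps.
Qed.

Lemma succv_size a b : succv a b -> size a = size b.
Proof. by case/and3P=> /eqP. Qed.

Lemma succv_prefix_sum a b i :
  succv a b -> (0 < i < size a)%N -> prefix_sum a i <= prefix_sum b i.
Proof. by case/and3P=> _ _ /allP le_ab lt_i; apply: le_ab; rewrite mem_iota; lia. Qed.

Lemma succv_antisym a b :
  \sum_(r <- a) r = \sum_(r <- b) r -> ~~ (succv a b && succv b a).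
Proof.
move=> eq_sum; apply/andP=> -[ab ba].
have eq_sz := succv_size ab.
suff eq_ab : a = b by case/and3P: ab => _; rewrite eq_ab eqxx.
apply: prefix_sum_inj => // i.
have [->|i_gt0] := posnP i; first by rewrite /prefix_sum !take0.
have [lt_i_a|le_a_i] := ltnP i (size a); last first.
  by rewrite /prefix_sum !take_oversize // -eq_sz.
apply/eqP; rewrite eq_le !succv_prefix_sum //; first by rewrite -eq_sz; lia.
by apply/andP.
Qed.

Lemma succv_trans a b c :
  \sum_(r <- a) r = \sum_(r <- b) r -> succv a b -> succv b c -> succv a c.
Proof.
move=> eq_sum ab bc; have sz_ab := succv_size ab; have sz_bc := succv_size bc.
apply/and3P; split; first by rewrite sz_ab sz_bc.
  by apply: contraNneq (succv_antisym eq_sum) => eq_ac; rewrite ab eq_ac bc.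
apply/allP=> i; rewrite mem_iota => lt_i.
by apply: (le_trans (y := prefix_sum b i)); apply: succv_prefix_sum;
  rewrite ?sz_ab -?sz_ab; lia.
Qed.

Lemma antichain_succv_not_succ (T : seq (seq R)) x y y0 :
  {in T &, forall a b, ~~ succv a b} ->
  {in T, forall t, \sum_(r <- t) r = \sum_(r <- x) r} ->
  y \in T -> y0 \in T -> succv x y -> ~~ succv y0 x.
Proof.
move=> anti eq_sum yT y0T xy; apply: contra (anti _ _ y0T yT) => y0x.
exact: succv_trans (eq_sum _ y0T) y0x xy.
Qed.

Lemma antichain_precv_not_prec (T : seq (seq R)) x y y0 :
  {in T &, forall a b, ~~ succv a b} ->
  {in T, forall t, \sum_(r <- t) r = \sum_(r <- x) r} ->
  y \in T -> y0 \in T -> precv x y -> ~~ precv y0 x.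
Proof.
move=> anti eq_sum yT y0T yx; apply: contra (anti _ _ yT y0T) => xy0.
exact: succv_trans (eq_sum _ yT) yx xy0.
Qed.

Lemma not_comparablev_or_succv x y : ~~ succv y x -> ~~ comparablev x y || succv x y.
Proof. by rewrite /comparablev => /negbTE->; case: succv. Qed.

Lemma not_comparablev_or_precv x y : ~~ precv y x -> ~~ comparablev x y || precv x y.
Proof. by rewrite /comparablev /precv => /negbTE->; case: succv. Qed.

Lemma sum_nseq k (z : R) : \sum_(r <- nseq k z) r = k%:R * z.
Proof. by rewrite big_nseq iter_addr_0 mulr_natl. Qed.

Lemma size_expand d s : size (expand d s) = (d * size s)%N.
Proof. by elim: s => [|r s IHs]; rewrite /= ?muln0 // size_cat size_nseq IHs mulnS. Qed.

Lemma sum_expand d s : \sum_(r <- expand d s) r = d%:R * \sum_(r <- s) r.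
Proof. by rewrite big_flatten big_map mulr_sumr; apply: eq_bigr => r _; rewrite sum_nseq. Qed.

Lemma take_expand d s i : take (i * d) (expand d s) = expand d (take i s).
Proof.
elim: s i => [|r s IHs] [|i] //=; first by rewrite take0.
by rewrite mulSn take_cat size_nseq ltnNge leq_addr /= addKn IHs.
Qed.

Lemma succv_expand d a b : (0 < d)%N -> succv (expand d a) (expand d b) -> succv a b.
Proof.
move=> d_gt0 /and3P[/eqP sz_ab ne_ab /allP le_ab].
have {}sz_ab : size a = size b.
  by apply/eqP; rewrite -(@eqn_pmul2l d _ _ d_gt0) -!size_expand sz_ab.
apply/and3P; split; first by rewrite sz_ab.
  by apply: contraNneq ne_ab => ->.
apply/allP=> i; rewrite mem_iota => lt_i.
have := le_ab (i * d)%N; rewrite size_expand mem_iota !take_expand !sum_expand.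
by rewrite ler_pM2l ?ltr0n //; apply; nia.
Qed.

Lemma expand_antichain d (T : seq (seq R)) : (0 < d)%N ->
  {in T &, forall a b, ~~ succv a b} ->
  {in map (expand d) T &, forall a b, ~~ succv a b}.
Proof.
move=> d_gt0 anti _ _ /mapP[a aT ->] /mapP[b bT ->].
by apply: contra (anti a b aT bT); apply: succv_expand.
Qed.

Lemma rest_sub (S : seq (seq R)) k : {subset rest S k <= S}.
Proof. by elim: k => [|k IHk] //= s; rewrite mem_filter => /andP[_ /IHk]. Qed.

Lemma layer_sub (S : seq (seq R)) i : {subset layer S i <= S}.
Proof. by move=> s; rewrite mem_filter => /andP[_ /rest_sub]. Qed.

Lemma layer_antichain (S : seq (seq R)) i :
  {in layer S i &, forall a b, ~~ succv a b}.
Proof.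
move=> a b; rewrite !mem_filter => /andP[_ a_rest] /andP[b_max _].
by apply: contra b_max => ab; apply/hasP; exists a.
Qed.

Lemma sum_iotaz N (p : seq nat * seq R) : chamber N p -> \sum_(r <- iotaz p) r = 0.
Proof.
case/and5P=> _ _ _ _ /eqP sum0; rewrite -[RHS]sum0 big_flatten big_map.
by apply: eq_bigr => jz _; rewrite sum_nseq.
Qed.

End SuccOrder.

Theorem lemma4p6 (R : realFieldType) (n d : nat)
    (Mp M : seq (seq nat * seq R)) :
  (0 < n)%N -> (1 < d)%N ->
  Mp != [::] ->
  all (chamber n) Mp ->
  all (chamber (n * d)) M ->
  all (fun p => Gtriple d p \in M) Mp ->
  let Sp := [seq iotaz p | p <- Mp] in
  let S := [seq iotaz p | p <- M] in
  let SG (i : nat) := [seq expand d s | s <- layer Sp i] in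
  let SGall := flatten [seq SG i | i <- iota 0 (ellp Sp).+1] in
  forall (x : seq R) (i : nat),
    x \in S -> x \notin SGall -> (i <= ellp Sp)%N ->
    ((exists2 y, y \in SG i & succv x y) ->
       forall y0, y0 \in SG i -> ~~ comparablev x y0 || succv x y0)
    /\
    ((exists2 y, y \in SG i & precv x y) ->
       forall y0, y0 \in SG i -> ~~ comparablev x y0 || precv x y0).
Proof.
move=> _ d_gt1 _ chMp chM _ Sp S SG _ x i xS _ _.
have d_gt0 : (0 < d)%N by lia.
have sum_x : \sum_(r <- x) r = 0.
  by case/mapP: xS => p pM ->; apply: sum_iotaz (allP chM p pM).
have sum_SG : {in SG i, forall y, \sum_(r <- y) r = \sum_(r <- x) r}.
  move=> _ /mapP[s /layer_sub /mapP[p pMp ->] ->].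
  by rewrite sum_expand sum_x (sum_iotaz (allP chMp p pMp)) mulr0.
have anti_SG := expand_antichain d_gt0 (@layer_antichain R Sp i).
split=> -[y yS xy] y0 y0S.
  exact/not_comparablev_or_succv/(antichain_succv_not_succ anti_SG sum_SG yS).
exact/not_comparablev_or_precv/(antichain_precv_not_prec anti_SG sum_SG yS).
Qed.
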